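(* If $f\in\mathrm{BV}^1$ then for every $n\ge1$, \[ n\,\|B_n(f)-f\|_\infty\le \frac{T_{f'}[-1,1]}{2}+\max\{\|O(f)\|_\infty,\|E(f)\|_\infty\}, \] where $T_{f'}[-1,1]$ is the total variation of $f'$ on $[-1,1]$.
   Context: Nodes: $x_{k,n}:=2k/n-1$, $k=0,\dots,n$. $B_n(f,x):=N_n(f,x)/D_n(x)$ for $x$ not a node, $B_n(f,x_{k,n}):=f(x_{k,n})$, where $N_n(f,x)=\sum_{k=0}^n(-1)^k\frac{f(x_{k,n})}{x-x_{k,n}}$ and $D_n(x)=\sum_{k=0}^n(-1)^k\frac{1}{x-x_{k,n}}$. $\mathrm{BV}^1$: functions $f:[-1,1]\to\mathbb{R}$ differentiable at every point of $[-1,1]$ (one-sided at $\pm1$) whose derivative $f'$ has bounded variation on $[-1,1]$. For $x\in(-1,1)$, $O(f,x):=\frac{f(x)-f(1)}{2(x-1)}-\frac{f(x)-f(-1)}{2(x+1)}$ and $E(f,x):=\frac{f(1)-f(x)}{2(x-1)}+\frac{f(-1)-f(x)}{2(x+1)}$; $\|O(f)\|_\infty,\|E(f)\|_\infty$ are suprema over $x\in(-1,1)$, and $\|B_n(f)-f\|_\infty=\sup_{x\in[-1,1]}|B_n(f,x)-f(x)|$. *)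

From HB Require Import structures.
From mathcomp Require Import all_boot all_order all_algebra.
From mathcomp Require Import all_classical all_reals all_analysis.
Set Implicit Arguments. Unset Strict Implicit. Unset Printing Implicit Defensive.
Import Order.TTheory GRing.Theory Num.Theory.
Import numFieldNormedType.Exports.
Local Open Scope classical_set_scope.
Local Open Scope ring_scope.

Section Berrut.
Context {R : realType}.

Definition node (n k : nat) : R := 2 * k%:R / n%:R - 1.

Definition is_node (n : nat) (x : R) : Prop := exists2 k : nat, (k <= n)%N & x = node n k.

Definition Nn (n : nat) (f : R -> R) (x : R) : R :=
  \sum_(0 <= k < n.+1) (-1) ^+ k * f (node n k) / (x - node n k).

Definition Dn (n : nat) (x : R) : R :=
  \sum_(0 <= k < n.+1) (-1) ^+ k / (x - node n k).

Definition Bn (n : nat) (f : R -> R) (x : R) : R :=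
  if `[< is_node n x >] then f x else Nn n f x / Dn n x.

Definition Of (f : R -> R) (x : R) : R :=
  (f x - f 1) / (2 * (x - 1)) - (f x - f (-1)) / (2 * (x + 1)).

Definition Ef (f : R -> R) (x : R) : R :=
  (f 1 - f x) / (2 * (x - 1)) + (f (-1) - f x) / (2 * (x + 1)).

(* fp is the derivative of f at every point of [-1,1], taken relative to
   [-1,1] (so one-sided at the endpoints -1 and 1). *)
Definition derivative_on_11 (f fp : R -> R) : Prop :=
  forall x : R, x \in `[-1, 1] ->
    (fun y => (f y - f x) / (y - x)) @
      within [set y | y \in `[-1, 1] /\ y != x] (nbhs x) --> fp x.

Definition BV1 (f fp : R -> R) : Prop :=
  derivative_on_11 f fp /\ bounded_variation (-1) 1 fp.

Definition supnorm (A : set R) (g : R -> R) : \bar R :=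
  ereal_sup [set (`|g x|)%:E | x in A].

End Berrut.

From HB Require Import structures.
From mathcomp Require Import all_boot all_order all_algebra.
From mathcomp Require Import all_classical all_reals all_analysis.
From mathcomp Require Import ring lra zify.
Set Implicit Arguments. Unset Strict Implicit. Unset Printing Implicit Defensive.
Import Order.TTheory GRing.Theory Num.Theory.
Import numFieldNormedType.Exports.
Local Open Scope classical_set_scope.
Local Open Scope ring_scope.

(* Off the nodes, B_n(f,x) - f(x) = - S(x) / D_n(x), where S(x) is the alternating
   sum of the slopes s_k of f between x and x_k.  Grouping the alternating tails of
   D_n on each side of x gives |D_n(x)| >= n.  Summation by parts turns 2 S(x) into
   s_0 + (-1)^n s_n, which is -2 O(f,x) or -2 E(f,x) according to the parity of n,
   plus sum_k (-1)^k (s_k - s_(k+1)).  Inserting x among the nodes, the slope over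
   two consecutive subintervals of the refined partition lies between the slopes
   over each of them, so sum_k |s_k - s_(k+1)| is at most the variation of the
   slopes over consecutive subintervals; by the mean value theorem these are
   values of f' at increasing points, whose variation is at most T_f'[-1,1]. *)

Lemma alternating_sum_by_parts (R : comPzRingType) (G : nat -> R) n :
  2 * \sum_(0 <= k < n.+1) (-1) ^+ k * G k =
  G 0%N + (-1) ^+ n * G n + \sum_(0 <= k < n) (-1) ^+ k * (G k - G k.+1).
Proof.
elim: n => [|n IHn]; first by rewrite big_nat1 big_geq // expr0 !mul1r addr0 mulr2n mulrDl mul1r.
rewrite big_nat_recr //= [in RHS]big_nat_recr //= mulrDr IHn exprS.
ring.
Qed.

Section RealAlgebra.
Context {R : realFieldType}.
Implicit Types (G c : nat -> R) (f : R -> R).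

Lemma alternating_sum_bounds (a : nat -> R) : (forall i, 0 <= a i.+1 <= a i) ->
  forall m, a 0%N - a 1%N <= \sum_(0 <= i < m.+1) (-1) ^+ i * a i <= a 0%N.
Proof.
move=> a_dec m; elim: m a a_dec => [|m IHm] a a_dec.
  by rewrite big_nat1 expr0 mul1r; have /andP[? ?] := a_dec 0%N; apply/andP; split; lra.
rewrite big_nat_recl // expr0 mul1r.
under eq_bigr do rewrite exprS mulN1r mulNr.
rewrite sumrN; have /andP[lo hi] := IHm (fun i => a i.+1) (fun i => a_dec i.+1).
have /andP[? ?] := a_dec 0%N; have /andP[? ?] := a_dec 1%N.
apply/andP; split; lra.
Qed.

Lemma alternating_sum_inv_ge (t h : R) m : 0 < t -> 0 < h ->
  t^-1 - h^-1 <= \sum_(0 <= i < m.+1) (-1) ^+ i / (t + i%:R * h).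
Proof.
move=> t_gt0 h_gt0.
have pos i : 0 < t + i%:R * h by rewrite (lt_le_trans t_gt0) // lerDl mulr_ge0 // ltW.
have dec i : 0 <= (t + i.+1%:R * h)^-1 <= (t + i%:R * h)^-1.
  by rewrite invr_ge0 ltW ?pos //= lef_pV2 ?posrE ?pos // lerD2l ler_wpM2r ?ler_nat // ltW.
have /andP[+ _] := alternating_sum_bounds (a := fun i => (t + i%:R * h)^-1) dec m.
apply: le_trans.
by rewrite mul0r addr0 mul1r lerD2l lerN2 lef_pV2 ?posrE ?addr_gt0 // lerDr ltW.
Qed.

Lemma four_div_sum_le_invD (t s : R) : 0 < t -> 0 < s -> 4 / (t + s) <= t^-1 + s^-1.
Proof.
move=> t_gt0 s_gt0.
rewrite ler_pdivrMr ?addr_gt0 //.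
have -> : (t^-1 + s^-1) * (t + s) = 4 + (t - s) ^+ 2 / (t * s).
  by field; rewrite !gt_eqF.
by rewrite lerDl divr_ge0 ?sqr_ge0 // ltW ?mulr_gt0.
Qed.

Definition slope f a b := (f b - f a) / (b - a).

Lemma slopeC f a b : slope f a b = slope f b a.
Proof. by rewrite /slope -[f b - f a]opprB -[b - a]opprB invrN mulrNN. Qed.

(* [slope f p r] is the convex combination of [slope f p q] and [slope f q r]
   with weights [(q - p) / (r - p)] and [(r - q) / (r - p)]. *)
Lemma slope_chord_between f p q r : p < q -> q < r ->
  `|slope f p q - slope f p r| + `|slope f p r - slope f q r|
  = `|slope f p q - slope f q r|.
Proof.
move=> pq qr; have pr := lt_trans pq qr.
have [qp0 rp0 rq0] : [/\ q - p != 0, r - p != 0 & r - q != 0].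
  by split; rewrite subr_eq0 gt_eqF.
have -> : slope f p q - slope f p r = (r - q) / (r - p) * (slope f p q - slope f q r).
  by rewrite /slope; field; rewrite qp0 rp0 rq0.
have -> : slope f p r - slope f q r = (q - p) / (r - p) * (slope f p q - slope f q r).
  by rewrite /slope; field; rewrite qp0 rp0 rq0.
have w1 : 0 <= (r - q) / (r - p) by rewrite divr_ge0 // subr_ge0 ltW.
have w2 : 0 <= (q - p) / (r - p) by rewrite divr_ge0 // subr_ge0 ltW.
rewrite (normrM ((r - q) / (r - p))) (normrM ((q - p) / (r - p))).
rewrite (ger0_norm w1) (ger0_norm w2) -!mulrDl.
by rewrite addrA subrK divff // mul1r.
Qed.

Lemma ler_sum_telescope (a b e : nat -> R) n :
  (forall k, (k < n)%N -> a k <= b k + (e k.+1 - e k)) -> e n <= e 0%N ->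
  \sum_(0 <= k < n) a k <= \sum_(0 <= k < n) b k.
Proof.
move=> abe en_le; apply: le_trans (_ : _ <= \sum_(0 <= k < n) (b k + (e k.+1 - e k))) _.
  by apply: ler_sum_nat => k /andP[_]; exact: abe.
by rewrite big_split /= telescope_sumr // gerDl subr_le0.
Qed.

Lemma sum_dist_le_between G c j n : (j < n)%N ->
  G j = c j -> G j.+1 = c j.+1 ->
  (forall k, (k < j)%N -> `|c k - G k| + `|G k - G k.+1| = `|c k - G k.+1|) ->
  (forall k, (j < k < n)%N ->
     `|G k - G k.+1| + `|G k.+1 - c k.+1| = `|G k - c k.+1|) ->
  \sum_(0 <= k < n) `|G k - G k.+1| <= \sum_(0 <= k < n) `|c k - c k.+1|.
Proof.
move=> jn Gj Gj1 G_left G_right.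
pose e k := if (k <= j)%N then `|c k - G k| else - `|G k - c k|.
apply: (ler_sum_telescope (e := e)) => [k kn|]; last first.
  by rewrite /e leqNgt jn /=; apply: le_trans (normr_ge0 _); rewrite oppr_le0.
rewrite /e; case: (ltngtP k j) => [kj|jk|->].
- have := G_left k kj; have := ler_distD (c k.+1) (c k) (G k.+1); lra.
- have := G_right k (ltac:(lia)); have := ler_distD (c k) (G k) (c k.+1); lra.
- rewrite Gj Gj1 !subrr normr0; lra.
Qed.

End RealAlgebra.

Section TotalVariation.
Context {R : realType}.
Implicit Types (g : R -> R).

Lemma total_variation_le_subitv g (a b c d : R) : c <= a -> a <= b -> b <= d ->
  (total_variation a b g <= total_variation c d g)%E.
Proof.
move=> ca ab bd.
rewrite (total_variationD _ ca (le_trans ab bd)) (total_variationD _ ab bd) addeA.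
apply: le_trans (leeDl _ (total_variation_ge0 _ bd)).
exact: leeDr (total_variation_ge0 _ ca).
Qed.

Lemma total_variation_ge_sum g (a : nat -> R) m c d :
  (forall i, (i < m)%N -> a i <= a i.+1) -> c <= a 0%N -> a m <= d ->
  ((\sum_(0 <= i < m) `|g (a i.+1) - g (a i)|)%:E <= total_variation c d g)%E.
Proof.
move=> a_incr ca0 amd.
suff [a0m sum_le] : a 0%N <= a m /\
    ((\sum_(0 <= i < m) `|g (a i.+1) - g (a i)|)%:E <= total_variation (a 0%N) (a m) g)%E.
  exact: le_trans sum_le (total_variation_le_subitv _ ca0 a0m amd).
clear amd; elim: m a_incr => [_|m IHm a_incr].
  by rewrite big_geq // total_variationxx.
have [a0m sum_le] := IHm (fun i im => a_incr i (ltnW im)).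
have amS := a_incr m (ltnSn m).
split; first exact: le_trans a0m amS.
rewrite big_nat_recr //= EFinD (total_variationD _ a0m amS).
by apply: leeD => //; exact: total_variation_ge.
Qed.

End TotalVariation.

Section Derivative.
Context {R : realType}.
Variables f fp : R -> R.
Hypothesis f_deriv : derivative_on_11 f fp.

Lemma derivative_on_11_slope_near (x : R) : x \in `[-1, 1] ->
  forall e : R, 0 < e -> exists2 d : R, 0 < d &
  forall y, y \in `[-1, 1] -> y != x -> `|y - x| < d ->
    `|fp x - (f y - f x) / (y - x)| < e.
Proof.
move=> xI e e_gt0; have /cvgrPdist_lt/(_ e e_gt0) := f_deriv xI.
rewrite near_withinE => /nbhs_normP [d d_gt0 near_x]; exists d => // y yI yx yd.
by apply: near_x; [rewrite /= distrC | split].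
Qed.

Lemma derivative_on_11_continuous : {within `[-1, 1], continuous f}.
Proof.
apply/subspace_continuousP => x xI; have xI' : x \in `[-1, 1] by rewrite inE.
apply/cvgrPdist_lt => e e_gt0.
have [d d_gt0 slope_near] := derivative_on_11_slope_near xI' ltr01.
set K := `|fp x| + 1.
have K_gt0 : 0 < K by rewrite ltr_pwDr.
rewrite near_withinE; apply/nbhs_normP; exists (Num.min d (e / K)).
  by rewrite /= lt_min d_gt0 divr_gt0.
move=> y /=; rewrite lt_min => /andP[yd yeK] yI.
have [->|yx] := eqVneq y x; first by rewrite subrr normr0.
have yx0 : y - x != 0 by rewrite subr_eq0.
have slope_le : `|(f y - f x) / (y - x)| <= K.
  have slope_near1 : `|fp x - (f y - f x) / (y - x)| < 1.
    by apply: slope_near; rewrite ?inE // distrC.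
  have := ler_distD (fp x) ((f y - f x) / (y - x)) 0; rewrite !subr0 => /le_trans; apply.
  by rewrite /K addrC lerD2l distrC ltW.
have -> : f x - f y = - ((f y - f x) / (y - x) * (y - x)) by rewrite divfK // opprB.
rewrite normrN normrM; apply: le_lt_trans (ler_wpM2r (normr_ge0 _) slope_le) _.
by rewrite mulrC -ltr_pdivlMr // distrC.
Qed.

Lemma derivative_on_11_is_derive (x : R) : x \in `]-1, 1[ -> is_derive x (1 : R) f (fp x).
Proof.
move=> xI; have xI' : x \in `[-1, 1] by exact: subset_itv_oo_cc.
have slope_cvg : (fun h : R => h^-1 *: ((f \o shift x) (h *: 1) - f x)) @ 0^' --> fp x.
  apply/cvgrPdist_lt => e e_gt0.
  have [d d_gt0 slope_near] := derivative_on_11_slope_near xI' e_gt0.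
  move: xI; rewrite in_itv /= => /andP[xl xr].
  rewrite near_withinE; apply/nbhs_normP; exists (Num.min d (Num.min (1 - x) (x + 1))).
    by rewrite /= !lt_min d_gt0 /=; apply/andP; split; lra.
  move=> h /=; rewrite !lt_min sub0r normrN => /and3P[hd h1 h2] h0.
  have hxI : h + x \in `[-1, 1].
    by move: h1 h2; rewrite in_itv /= !ltr_norml => /andP[? ?] /andP[? ?]; apply/andP; split; lra.
  have := slope_near _ hxI; rewrite addrK => /(_ _ hd).
  rewrite -[h%:A]/(h * 1) mulr1 -[h^-1 *: _]/(h^-1 * _) mulrC; apply.
  by rewrite -subr_eq0 addrK.
by apply: DeriveDef; [apply/cvg_ex; exists (fp x) | exact: cvg_lim slope_cvg].
Qed.

Lemma derivative_on_11_MVT a b : -1 <= a -> a < b -> b <= 1 ->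
  exists2 c, c \in `]a, b[ & f b - f a = fp c * (b - a).
Proof.
move=> a_ge ab b_le; apply: MVT => //.
  move=> z; rewrite in_itv /= => /andP[az zb]; apply: derivative_on_11_is_derive.
  by rewrite in_itv /=; apply/andP; split; lra.
apply: continuous_subspaceW derivative_on_11_continuous.
by move=> z /=; rewrite !in_itv /= => /andP[az zb]; apply/andP; split; lra.
Qed.

Lemma sum_dist_slopes_le_total_variation (p : nat -> R) m :
  (forall i, (i <= m.+1)%N -> -1 <= p i <= 1) ->
  (forall i, (i <= m)%N -> p i < p i.+1) ->
  ((\sum_(0 <= k < m) `|slope f (p k) (p k.+1) - slope f (p k.+1) (p k.+2)|)%:E
    <= total_variation (-1) 1 fp)%E.
Proof.
move=> p_in p_incr.
have : forall i, exists c, (i <= m)%N ->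
    p i < c < p i.+1 /\ slope f (p i) (p i.+1) = fp c.
  move=> i; case: (leqP i m) => im; last by exists 0.
  have /andP[pi_ge _] := p_in i (leqW im).
  have /andP[_ pi1_le] := p_in i.+1 im.
  have [c cI fpc] := derivative_on_11_MVT pi_ge (p_incr i im) pi1_le.
  exists c => _; split; first by move: cI; rewrite in_itv.
  by rewrite /slope fpc mulfK // subr_eq0 gt_eqF ?p_incr.
move=> /choice[c c_spec].
have c_incr i : (i < m)%N -> c i <= c i.+1.
  move=> im; have [/andP[_ ci_lt] _] := c_spec i (ltnW im).
  by have [/andP[ci1_gt _] _] := c_spec i.+1 im; exact/ltW/(lt_trans ci_lt).
have -> : \sum_(0 <= k < m) `|slope f (p k) (p k.+1) - slope f (p k.+1) (p k.+2)|
    = \sum_(0 <= k < m) `|fp (c k.+1) - fp (c k)|.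
  apply: eq_big_nat => k /andP[_ km].
  by rewrite (c_spec k (ltnW km)).2 (c_spec k.+1 km).2 distrC.
apply: (total_variation_ge_sum fp c_incr).
- have [/andP[c0_gt _] _] := c_spec 0%N (leq0n m).
  have /andP[p0_ge _] := p_in 0%N (leq0n _).
  exact/ltW/(le_lt_trans p0_ge c0_gt).
- have [/andP[_ cm_lt] _] := c_spec m (leqnn m).
  have /andP[_ pm_le] := p_in m.+1 (leqnn _).
  exact/ltW/(lt_le_trans cm_lt pm_le).
Qed.

End Derivative.

Section SupNorm.
Context {R : realType}.
Implicit Types (A : set R) (g : R -> R).

Lemma supnorm_ge A g x : A x -> (`|g x|%:E <= supnorm A g)%E.
Proof. by move=> Ax; apply: ereal_sup_ubound; exists x. Qed.

Lemma mule_supnorm_le A g (c : R) (M : \bar R) : 0 < c ->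
  (forall x, A x -> ((c * `|g x|)%:E <= M)%E) -> (c%:E * supnorm A g <= M)%E.
Proof.
move=> c_gt0 le_M; rewrite /supnorm -ereal_sup_pZl //.
by apply: ge_ereal_sup => _ [_ [x Ax <-] <-]; rewrite -EFinM; exact: le_M.
Qed.

End SupNorm.

Section Berrut.
Context {R : realType}.
Variable n : nat.
Hypothesis n_gt0 : (0 < n)%N.

Lemma node_0 : node n 0 = -1 :> R.
Proof. by rewrite /node mulr0 mul0r sub0r. Qed.

Lemma node_n : node n n = 1 :> R.
Proof. rewrite /node mulfK ?gt_eqF ?ltr0n //; lra. Qed.

Lemma nodeD i k : node n (i + k) = node n k + i%:R * (2 / n%:R) :> R.
Proof. by rewrite /node natrD; field; rewrite gt_eqF ?ltr0n. Qed.

Lemma node_lt k l : (k < l)%N -> node n k < node n l :> R.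
Proof. by move=> kl; rewrite /node ltrD2r ltr_pM2r ?invr_gt0 ?ltr0n // ltr_pM2l // ltr_nat. Qed.

Lemma node_le k l : (k <= l)%N -> node n k <= node n l :> R.
Proof. by rewrite leq_eqVlt => /orP[/eqP-> // | /node_lt/ltW]. Qed.

Lemma node_in k : (k <= n)%N -> -1 <= (node n k : R) <= 1.
Proof. by move=> kn; rewrite -node_0 -node_n !node_le. Qed.

Lemma node_between (x : R) : x \in `[-1, 1] -> ~ is_node n x ->
  exists2 j, (j < n)%N & node n j < x < node n j.+1.
Proof.
rewrite in_itv /= => /andP[x_ge x_le] xnode.
have left_of_x : exists k, (k <= n)%N && (node n k < x).
  exists 0%N; rewrite leq0n node_0 lt_neqAle x_ge andbT /=.
  by apply/eqP => x_eq; apply: xnode; exists 0%N; rewrite ?node_0.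
have ub k : (k <= n)%N && (node n k < x) -> (k <= n)%N by case/andP.
have [j /andP[jn xj] j_max] := ex_maxnP left_of_x ub.
have jn' : (j < n)%N.
  by rewrite ltn_neqAle jn andbT; apply/eqP => jn_eq; move: xj; rewrite jn_eq node_n; lra.
exists j => //; rewrite xj lt_neqAle /=; apply/andP; split.
  by apply/eqP => x_eq; apply: xnode; exists j.+1.
rewrite leNgt; apply/negP => x_lt.
by have := j_max j.+1; rewrite jn' x_lt => /(_ isT); rewrite ltnn.
Qed.

Lemma not_node_itv_oo (x : R) : x \in `[-1, 1] -> ~ is_node n x -> x \in `]-1, 1[.
Proof.
move=> xI xnode; have [j jn /andP[xl xr]] := node_between xI xnode.
have /andP[lo _] := node_in (ltnW jn); have /andP[_ hi] := node_in jn.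
by rewrite in_itv /=; apply/andP; split; lra.
Qed.

Definition refined_nodes j (x : R) m :=
  if (m <= j)%N then node n m else if m == j.+1 then x else node n m.-1.

Section RefinedNodes.
Variables (j : nat) (x : R).
Hypotheses (jn : (j < n)%N) (xj : node n j < x < node n j.+1).

Lemma refined_nodes_le m : (m <= j)%N -> refined_nodes j x m = node n m.
Proof. by rewrite /refined_nodes => ->. Qed.

Lemma refined_nodes_x : refined_nodes j x j.+1 = x.
Proof. by rewrite /refined_nodes ltnn eqxx. Qed.

Lemma refined_nodes_gt m : (j.+1 < m)%N -> refined_nodes j x m = node n m.-1.
Proof. by move=> jm; rewrite /refined_nodes leqNgt (ltnW jm) gtn_eqF. Qed.

Lemma refined_nodes_incr i : (i <= n)%N -> refined_nodes j x i < refined_nodes j x i.+1.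
Proof.
move=> i_le; case/andP: xj => xl xr.
case: (ltngtP i j) => [ij|ji|->]; last by rewrite refined_nodes_le // refined_nodes_x.
  by rewrite !refined_nodes_le ?node_lt // ltnW.
have [->|ij1] := eqVneq i j.+1; first by rewrite refined_nodes_x refined_nodes_gt.
rewrite !refined_nodes_gt; [apply: node_lt | |]; lia.
Qed.

Lemma refined_nodes_in i : (i <= n.+1)%N -> -1 <= refined_nodes j x i <= 1.
Proof.
move=> i_le; case/andP: xj => xl xr.
have [ij|ji] := leqP i j.
  by rewrite refined_nodes_le // node_in // (leq_trans ij (ltnW jn)).
have [->|ij1] := eqVneq i j.+1; last by rewrite refined_nodes_gt ?node_in //; lia.
have /andP[lo _] := node_in (ltnW jn); have /andP[_ hi] := node_in jn.
by rewrite refined_nodes_x; apply/andP; split; lra.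
Qed.

End RefinedNodes.

Lemma Dn_ge j (x : R) : (j < n)%N -> node n j < x < node n j.+1 ->
  n%:R <= (-1) ^+ j * Dn n x.
Proof.
move=> jn /andP[xl xr].
have h_gt0 : 0 < 2 / n%:R :> R by rewrite divr_gt0 ?ltr0n.
have left_tail : (-1) ^+ j * \sum_(0 <= k < j.+1) (-1) ^+ k / (x - node n k)
    = \sum_(0 <= i < j.+1) (-1) ^+ i / (x - node n j + i%:R * (2 / n%:R)).
  rewrite big_nat_rev mulr_sumr; apply: eq_big_nat => i /andP[_ ij] /=.
  rewrite add0n subSS mulrA -exprD.
  have -> : (j + (j - i) = 2 * (j - i) + i)%N by lia.
  rewrite exprD exprM sqrrN !expr1n mul1r.
  have -> : node n j = node n (j - i) + i%:R * (2 / n%:R) :> R by rewrite -nodeD subnKC.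
  by rewrite [in RHS]opprD [in RHS]addrA subrK.
have right_tail : (-1) ^+ j * \sum_(j.+1 <= k < n.+1) (-1) ^+ k / (x - node n k)
    = \sum_(0 <= i < (n - j.+1).+1) (-1) ^+ i / (node n j.+1 - x + i%:R * (2 / n%:R)).
  rewrite -{1}(add0n j.+1) big_addn subSS -(subnSK jn) mulr_sumr.
  apply: eq_big_nat => i _; rewrite mulrA -exprD.
  have -> : (j + (i + j.+1) = 2 * j + i.+1)%N by lia.
  rewrite exprD exprM sqrrN !expr1n mul1r exprS mulN1r -[x - _]opprB invrN mulrNN.
  by rewrite nodeD addrAC.
have t_gt0 : 0 < x - node n j by rewrite subr_gt0.
have s_gt0 : 0 < node n j.+1 - x by rewrite subr_gt0.
rewrite /Dn (@big_cat_nat _ _ _ j.+1 0 n.+1) //=; last by rewrite ltnS ltnW.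
rewrite mulrDr left_tail right_tail.
have := alternating_sum_inv_ge j t_gt0 h_gt0.
have := alternating_sum_inv_ge (n - j.+1) s_gt0 h_gt0.
have := four_div_sum_le_invD t_gt0 s_gt0.
have -> : x - node n j + (node n j.+1 - x) = 2 / n%:R.
  by rewrite -add1n nodeD mul1r; ring.
have -> : 4 / (2 / n%:R) = 2 * n%:R :> R by field; rewrite gt_eqF ?ltr0n.
rewrite invf_div; lra.
Qed.

Variable f : R -> R.

Definition Sn (x : R) := \sum_(0 <= k < n.+1) (-1) ^+ k * slope f x (node n k).

Lemma Bn_sub_f (x : R) : ~ is_node n x -> Dn n x != 0 ->
  Bn n f x - f x = - Sn x / Dn n x.
Proof.
move=> xnode D_neq0; rewrite /Bn asboolF //.
have -> : Nn n f x = f x * Dn n x - Sn x.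
  rewrite /Nn /Dn /Sn mulr_sumr -sumrB; apply: eq_big_nat => k /andP[_ kn].
  have xk : x - node n k != 0.
    by rewrite subr_eq0; apply/eqP => x_eq; apply: xnode; exists k.
  by rewrite /slope -[node n k - x]opprB; field.
by field.
Qed.

Lemma slope_ends_le (x : R) : x \in `]-1, 1[ ->
  `|slope f x (-1) + (-1) ^+ n * slope f x 1| <= 2 * Num.max `|Of f x| `|Ef f x|.
Proof.
rewrite in_itv /= => /andP[x_gt x_lt].
have [xm1 xp1] : x - 1 != 0 /\ x + 1 != 0 by split; apply/eqP; lra.
have [m1x p1x] : -1 - x != 0 /\ 1 - x != 0 by split; apply/eqP; lra.
rewrite -signr_odd; case: (odd n); rewrite /= ?expr1 ?expr0 ?mulN1r ?mul1r.
  have -> : slope f x (-1) - slope f x 1 = - 2 * Of f x.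
    by rewrite /slope /Of; field; rewrite xm1 xp1 m1x p1x.
  by rewrite normrM normrN (@ger0_norm _ 2) // ler_pM2l // le_max lexx.
have -> : slope f x (-1) + slope f x 1 = - 2 * Ef f x.
  by rewrite /slope /Ef; field; rewrite xm1 xp1 m1x p1x.
by rewrite normrM normrN (@ger0_norm _ 2) // ler_pM2l // le_max lexx orbT.
Qed.

Lemma Sn_le (x : R) : x \in `]-1, 1[ ->
  2 * `|Sn x| <= 2 * Num.max `|Of f x| `|Ef f x| +
    \sum_(0 <= k < n) `|slope f x (node n k) - slope f x (node n k.+1)|.
Proof.
move=> xI; rewrite -{1}(@ger0_norm _ 2) // -normrM /Sn alternating_sum_by_parts.
apply: le_trans (ler_normD _ _) _; apply: lerD.
  by rewrite /= node_0 node_n; exact: slope_ends_le.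
apply: le_trans (ler_norm_sum _ _ _) _; apply: ler_sum => k _.
by rewrite normrM normrX normrN1 expr1n mul1r.
Qed.

Lemma Bn_error_le (x : R) : x \in `[-1, 1] -> ~ is_node n x ->
  n%:R * `|Bn n f x - f x| <=
    (\sum_(0 <= k < n) `|slope f x (node n k) - slope f x (node n k.+1)|) / 2
    + Num.max `|Of f x| `|Ef f x|.
Proof.
move=> xI xnode; have [j jn xj] := node_between xI xnode.
have D_ge : n%:R <= `|Dn n x|.
  apply: le_trans (Dn_ge jn xj) (le_trans (ler_norm _) _).
  by rewrite normrM normrX normrN1 expr1n mul1r.
have D_gt0 : 0 < `|Dn n x| by apply: lt_le_trans D_ge; rewrite ltr0n.
have S_le : `|Sn x| <=
    (\sum_(0 <= k < n) `|slope f x (node n k) - slope f x (node n k.+1)|) / 2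
    + Num.max `|Of f x| `|Ef f x|.
  by have := Sn_le (not_node_itv_oo xI xnode); lra.
rewrite Bn_sub_f -?normr_gt0 // normrM normrN normfV mulrA ler_pdivrMr //.
apply: le_trans (ler_wpM2r (normr_ge0 _) D_ge) _.
by rewrite [leRHS]mulrC ler_pM2l.
Qed.

Variable fp : R -> R.
Hypothesis f_deriv : derivative_on_11 f fp.

Lemma sum_dist_slopes_node_le (x : R) : x \in `[-1, 1] -> ~ is_node n x ->
  ((\sum_(0 <= k < n) `|slope f x (node n k) - slope f x (node n k.+1)|)%:E
   <= total_variation (-1) 1 fp)%E.
Proof.
move=> xI xnode; have [j jn xj] := node_between xI xnode; have /andP[xl xr] := xj.
apply: le_trans (sum_dist_slopes_le_total_variation f_deriv
  (refined_nodes_in jn xj) (refined_nodes_incr jn xj)).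
rewrite lee_fin; apply: (sum_dist_le_between jn) => /=.
- by rewrite refined_nodes_le // refined_nodes_x slopeC.
- by rewrite refined_nodes_x refined_nodes_gt.
- move=> k kj; rewrite !refined_nodes_le ?(ltnW kj) // !(slopeC f x).
  by apply: slope_chord_between; [exact: node_lt | exact: le_lt_trans (node_le kj) xl].
- move=> k /andP[jk kn]; have jk2 : (j.+1 < k.+2)%N by rewrite ltnS ltnW.
  rewrite !refined_nodes_gt //=.
  by apply: slope_chord_between; [exact: lt_le_trans xr (node_le jk) | exact: node_lt].
Qed.

Lemma Bn_error_le_total_variation (x : R) : x \in `[-1, 1] ->
  ((n%:R * `|Bn n f x - f x|)%R%:E <= total_variation (-1)%R 1%R fp * (2^-1)%R%:E
    + maxe (supnorm `](-1)%R, 1%R[ (Of f)) (supnorm `](-1)%R, 1%R[ (Ef f)))%E.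
Proof.
move=> xI; have [xnode|xnode] := pselect (is_node n x).
  rewrite /Bn asboolT // subrr normr0 mulr0; apply: adde_ge0.
    by rewrite mule_ge0 ?total_variation_ge0 ?lee_fin ?invr_ge0 ?ler0n ?lerN10.
  have zero_in : `]-1, 1[%classic (0 : R) by rewrite /= in_itv /= ltrN10 ltr01.
  by rewrite le_max (le_trans _ (supnorm_ge _ zero_in)).
have xI' := not_node_itv_oo xI xnode.
have := Bn_error_le xI xnode; rewrite -lee_fin => /le_trans; apply.
rewrite EFinD EFinM EFin_max; apply: leeD.
  by apply: lee_wpmul2r; [rewrite lee_fin invr_ge0 | exact: sum_dist_slopes_node_le].
by apply: le_max2; exact: supnorm_ge.
Qed.

End Berrut.

Theorem theorem3 (R : realType) (f fp : R -> R) (n : nat) :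
  BV1 f fp -> (1 <= n)%N ->
  ((n%:R)%:E * supnorm `[(-1)%R, 1%R] (fun x => (Bn n f x - f x)%R)
   <= total_variation (-1)%R 1%R fp * (2^-1)%R%:E
      + maxe (supnorm `](-1)%R, 1%R[ (Of f)) (supnorm `](-1)%R, 1%R[ (Ef f)))%E.
Proof.
(* The variation of fp need not be finite: the bound holds in \bar R. *)
move=> [f_deriv _] n_gt0.
apply: mule_supnorm_le; first by rewrite ltr0n.
by move=> x xI; exact: Bn_error_le_total_variation.
Qed.
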